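(* Let $\odot$ be a non-degenerate pseudo-multiplication and let $\tau$ be a $\sigma$-maxitive measure on a $\sigma$-algebra $\mathcal{B}$ on a nonempty set $E$ having the Radon–Nikodym property with respect to the idempotent $\odot$-integral. Then $\tau$ has no $\odot$-spot. That is, there is no $B_0\in\mathcal{B}$ such that $\tau(B_0)$ is $\odot$-infinite and, for every $A\in\mathcal{B}$ with $A\subset B_0$, $\tau(A)$ is either $0$ or $\odot$-infinite.
   Context: Write $\overline{\mathbb{R}}_+=[0,\infty]$. A pseudo-multiplication is a binary operation $\odot$ on $\overline{\mathbb{R}}_+$ with the following properties: - it is associative; - it is continuous on $(0,\infty)\times[0,\infty]$; - for every $t$, the map $s\mapsto s\odot t$ is continuous on $(0,\infty]$; - it is nondecreasing in each argument; - it has a left identity $1_\odot$, i.e. $1_\odot\odot t=t$ for all $t$; - it has no zero divisors, i.e. $s\odot t=0$ implies $s=0$ or $t=0$; - $0\odot t=t\odot 0=0$ for all $t$. Put $O(t)=\inf_{s>0}s\odot t$. An element $t$ is $\odot$-finite if $O(t)=0$, and $\odot$-infinite otherwise. The operation $\odot$ is non-degenerate if $1_\odot$ is $\odot$-finite. A $\sigma$-maxitive measure on $\mathcal{B}$ is a map $\nu:\mathcal{B}\to\overline{\mathbb{R}}_+$ with $\nu(\emptyset)=0$ and $\nu(\bigcup_j B_j)=\sup_j\nu(B_j)$ for every countable family. A map $f:E\to\overline{\mathbb{R}}_+$ is $\mathcal{B}$-measurable if $\{f>t\}\in\mathcal{B}$ for all $t\in[0,\infty)$. The idempotent $\odot$-integral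 is $\int^\infty_B f\odot d\tau=\sup_{t\in[0,\infty)}t\odot\tau(B\cap\{f>t\})$. $\nu\ll_\odot\tau$ means $\nu(B)\le\infty\odot\tau(B)$ for every $B\in\mathcal{B}$ with $\tau(B)$ $\odot$-finite. $\tau$ has the Radon–Nikodym property if every $\sigma$-maxitive $\nu\ll_\odot\tau$ admits a $\mathcal{B}$-measurable $c:E\to\overline{\mathbb{R}}_+$ with $\nu(B)=\int^\infty_B c\odot d\tau$ for all $B\in\mathcal{B}$. *)

From Stdlib Require Import Reals.
Open Scope R_scope.
Set Implicit Arguments.

Definition Rnn := {x : R | 0 <= x}.
Inductive ERp : Type := Fin (x : Rnn) | Inf.

Definition zeroE : ERp := Fin (exist _ 0 (Rle_refl 0)).

Definition leE (a b : ERp) : Prop :=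
  match a, b with
  | Fin x, Fin y => proj1_sig x <= proj1_sig y
  | _, Inf => True
  | Inf, Fin _ => False
  end.
Definition ltE (a b : ERp) : Prop := ~ leE b a.

Definition is_finE (a : ERp) : Prop := exists x, a = Fin x.

Definition is_lubE (S : ERp -> Prop) (s : ERp) : Prop :=
  (forall u, S u -> leE u s) /\ (forall v, (forall u, S u -> leE u v) -> leE s v).
Definition is_glbE (S : ERp -> Prop) (s : ERp) : Prop :=
  (forall u, S u -> leE s u) /\ (forall v, (forall u, S u -> leE v u) -> leE v s).

Definition ballE (a : ERp) (eps : R) (b : ERp) : Prop :=
  match a, b with
  | Fin x, Fin y => Rabs (proj1_sig y - proj1_sig x) < eps
  | Fin _, Inf => False
  | Inf, Inf => True
  | Inf, Fin y => / eps < proj1_sig y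
  end.
Definition nearE (a : ERp) (P : ERp -> Prop) : Prop :=
  exists eps, 0 < eps /\ forall b, ballE a eps b -> P b.

Definition cont_at_rel (D : ERp -> Prop) (g : ERp -> ERp) (a : ERp) : Prop :=
  forall V, nearE (g a) V -> nearE a (fun b => D b -> V (g b)).
Definition cont2_at_rel (D1 D2 : ERp -> Prop) (g : ERp -> ERp -> ERp) (a1 a2 : ERp) : Prop :=
  forall V, nearE (g a1 a2) V ->
    exists U1 U2, nearE a1 U1 /\ nearE a2 U2 /\
      forall b1 b2, D1 b1 -> D2 b2 -> U1 b1 -> U2 b2 -> V (g b1 b2).

Definition posfin (s : ERp) : Prop := ltE zeroE s /\ is_finE s.
Definition pos (s : ERp) : Prop := ltE zeroE s.

Definition pseudo_mult (mul : ERp -> ERp -> ERp) (one : ERp) : Prop :=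
  (forall a b c, mul (mul a b) c = mul a (mul b c)) /\
  (forall s t, posfin s -> cont2_at_rel posfin (fun _ => True) mul s t) /\
  (forall t s, pos s -> cont_at_rel pos (fun u => mul u t) s) /\
  (forall s s' t, leE s s' -> leE (mul s t) (mul s' t)) /\
  (forall s t t', leE t t' -> leE (mul s t) (mul s t')) /\
  (forall t, mul one t = t) /\
  (forall s t, mul s t = zeroE -> s = zeroE \/ t = zeroE) /\
  (forall t, mul zeroE t = zeroE /\ mul t zeroE = zeroE).

Definition odot_finite (mul : ERp -> ERp -> ERp) (t : ERp) : Prop :=
  is_glbE (fun u => exists s, ltE zeroE s /\ u = mul s t) zeroE.
Definition odot_infinite mul t : Prop := ~ odot_finite mul t.

Definition non_degenerate mul one : Prop := odot_finite mul one.

Definition sigma_algebra {E : Type} (B : (E -> Prop) -> Prop) : Prop :=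
  B (fun _ => False) /\
  (forall A, B A -> B (fun x => ~ A x)) /\
  (forall F : nat -> E -> Prop, (forall j, B (F j)) -> B (fun x => exists j, F j x)).

Definition sigma_maxitive {E : Type} (B : (E -> Prop) -> Prop) (nu : (E -> Prop) -> ERp) : Prop :=
  nu (fun _ => False) = zeroE /\
  forall F : nat -> E -> Prop, (forall j, B (F j)) ->
    is_lubE (fun u => exists j, u = nu (F j)) (nu (fun x => exists j, F j x)).

Definition measurable {E : Type} (B : (E -> Prop) -> Prop) (f : E -> ERp) : Prop :=
  forall t, is_finE t -> B (fun x => ltE t (f x)).

Definition idem_integral_is {E : Type} mul (tau : (E -> Prop) -> ERp)
  (A : E -> Prop) (f : E -> ERp) (v : ERp) : Prop :=
  is_lubE (fun u => exists t, is_finE t /\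
             u = mul t (tau (fun x => A x /\ ltE t (f x)))) v.

Definition abs_cont {E : Type} mul (B : (E -> Prop) -> Prop) (nu tau : (E -> Prop) -> ERp) : Prop :=
  forall A, B A -> odot_finite mul (tau A) -> leE (nu A) (mul Inf (tau A)).

Definition radon_nikodym {E : Type} mul (B : (E -> Prop) -> Prop) (tau : (E -> Prop) -> ERp) : Prop :=
  forall nu, sigma_maxitive B nu -> abs_cont mul B nu tau ->
    exists c : E -> ERp, measurable B c /\
      forall A, B A -> idem_integral_is mul tau A c (nu A).

Definition has_spot {E : Type} mul (B : (E -> Prop) -> Prop) (tau : (E -> Prop) -> ERp) : Prop :=
  exists B0, B B0 /\ odot_infinite mul (tau B0) /\
    forall A, B A -> (forall x, A x -> B0 x) ->
      tau A = zeroE \/ odot_infinite mul (tau A).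

(** Suppose [B0] were a ⊙-spot of [tau]: [tau B0] is ⊙-infinite and every
    measurable [A ⊆ B0] has [tau A] equal to [0] or ⊙-infinite.  Consider the
    two-valued set function
        nu A = 0  if tau (A ∩ B0) = 0,      nu A = 1⊙  otherwise.
    It is σ-maxitive because [tau] is, and [nu ≪⊙ tau]: if [tau A] is
    ⊙-finite then so is [tau (A ∩ B0) ≤ tau A], and the spot property forces
    [tau (A ∩ B0) = 0].  The Radon–Nikodym property yields a density [c] with
    [1⊙ = nu B0 = sup_t t ⊙ tau (B0 ∩ {c > t})].  As [1⊙ ≠ 0], one term
    [t ⊙ tau (B0 ∩ {c > t})] is nonzero; then [t > 0] and, by the spot
    property, [tau (B0 ∩ {c > t})] is ⊙-infinite, hence so is the term.  But
    the term lies below the ⊙-finite element [1⊙] (non-degeneracy), and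
    ⊙-finiteness is inherited downwards: contradiction. *)

From Stdlib Require Import Reals Lra.
From Stdlib Require Import Classical ClassicalEpsilon FunctionalExtensionality
  PropExtensionality ProofIrrelevance.

Lemma le0 x : leE zeroE x.
Proof. destruct x as [[r p]|]; simpl; auto. Qed.

Lemma le_refl x : leE x x.
Proof. destruct x as [[r p]|]; simpl; auto. apply Rle_refl. Qed.

Lemma le_trans x y z : leE x y -> leE y z -> leE x z.
Proof. destruct x as [[r p]|], y as [[r' p']|], z as [[r'' p'']|]; simpl; try tauto; lra. Qed.

Lemma le0_eq x : leE x zeroE -> x = zeroE.
Proof.
  destruct x as [[r p]|]; simpl; [|tauto]. intro H.
  assert (r = 0) by lra. subst. unfold zeroE. f_equal. f_equal. apply proof_irrelevance.
Qed.

Lemma pos_of_ne0 t : t <> zeroE -> ltE zeroE t.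
Proof. intros H Hle. apply H, le0_eq, Hle. Qed.

Lemma inf_pos : ltE zeroE Inf.
Proof. unfold ltE; simpl; tauto. Qed.

Lemma lub_nonzero_witness (S : ERp -> Prop) s :
  is_lubE S s -> s <> zeroE -> exists u, S u /\ u <> zeroE.
Proof.
  intros [_ Hleast] Hs. apply NNPP; intro Hnone. apply Hs, le0_eq, Hleast.
  intros u Hu. destruct (classic (u = zeroE)) as [-> | Hu0].
  - apply le_refl.
  - exfalso. eauto.
Qed.

Lemma set_ext {E : Type} (X Y : E -> Prop) : (forall x, X x <-> Y x) -> X = Y.
Proof.
  intro H. apply functional_extensionality; intro x. apply propositional_extensionality, H.
Qed.

Section PseudoMultiplication.
Variable mul : ERp -> ERp -> ERp.
Variable one : ERp.
Hypothesis PM : pseudo_mult mul one.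

Lemma odot_finite_mono t t' : leE t t' -> odot_finite mul t' -> odot_finite mul t.
Proof.
  destruct PM as (_&_&_&_&mono_r&_).
  intros Hle [_ Hglb]. split.
  - intros u _. apply le0.
  - intros v Hv. apply Hglb. intros u [s [Hs ->]].
    apply (le_trans v (mul s t) (mul s t')); [apply Hv; eauto | apply mono_r; auto].
Qed.

(** Multiplying a ⊙-infinite element on the left by a positive [t] keeps it
    ⊙-infinite: by associativity [s ⊙ (t ⊙ u) = (s ⊙ t) ⊙ u] with [s ⊙ t > 0]. *)
Lemma odot_infinite_mul t u :
  ltE zeroE t -> odot_infinite mul u -> odot_infinite mul (mul t u).
Proof.
  destruct PM as (assoc&_&_&_&_&_&no_zero_div&_).
  intros Ht Hu [_ Hglb]. apply Hu. split.
  - intros w _. apply le0.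
  - intros v Hv. apply Hglb. intros w [s [Hs ->]].
    rewrite <- assoc. apply Hv. exists (mul s t). split; auto.
    apply pos_of_ne0. intro E0. destruct (no_zero_div _ _ E0) as [-> | ->].
    + apply Hs, le_refl.
    + apply Ht, le_refl.
Qed.

Lemma zero_odot_finite : odot_finite mul zeroE.
Proof.
  destruct PM as (_&_&_&_&_&_&_&absorb).
  split.
  - intros; apply le0.
  - intros v Hv. apply Hv. exists Inf. split; [apply inf_pos | symmetry; apply absorb].
Qed.

(** The left identity is nonzero, since [0 ⊙ oo = 0 <> oo]. *)
Lemma one_ne0 : one <> zeroE.
Proof.
  destruct PM as (_&_&_&_&_&left_id&_&absorb).
  intro H. assert (HI := left_id Inf). rewrite H, (proj1 (absorb Inf)) in HI. discriminate.
Qed.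

(** A density [c] on a set [B0] all of whose superlevel sets have measure
    [0] or ⊙-infinite cannot integrate to a nonzero ⊙-finite value [a]:
    a nonzero term of the supremum would be ⊙-infinite yet below [a]. *)
Lemma no_integral_on_spot {E : Type} (tau : (E -> Prop) -> ERp) B0 c a :
  odot_finite mul a -> a <> zeroE ->
  (forall t, is_finE t ->
     tau (fun x => B0 x /\ ltE t (c x)) = zeroE \/
     odot_infinite mul (tau (fun x => B0 x /\ ltE t (c x)))) ->
  ~ idem_integral_is mul tau B0 c a.
Proof.
  destruct PM as (_&_&_&_&_&_&_&absorb).
  intros Ha_fin Ha0 Hlevels Hint.
  destruct (lub_nonzero_witness _ _ Hint Ha0) as [w [[t [Ht ->]] Hw0]].
  set (u := tau (fun x => B0 x /\ ltE t (c x))) in *.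
  assert (Ht0 : t <> zeroE) by (intro e; apply Hw0; rewrite e; apply absorb).
  assert (Hu_inf : odot_infinite mul u).
  { destruct (Hlevels t Ht) as [e|e]; [|exact e].
    exfalso; apply Hw0; unfold u; rewrite e; apply absorb. }
  apply (odot_infinite_mul _ _ (pos_of_ne0 _ Ht0) Hu_inf).
  apply (odot_finite_mono _ a); [apply (proj1 Hint); exists t; auto | exact Ha_fin].
Qed.

End PseudoMultiplication.

Section MaxitiveMeasure.
Variable E : Type.
Variable B : (E -> Prop) -> Prop.
Hypothesis SA : sigma_algebra B.
Variable tau : (E -> Prop) -> ERp.
Hypothesis SM : sigma_maxitive B tau.

Lemma measurable_inter X Y : B X -> B Y -> B (fun x => X x /\ Y x).
Proof.
  destruct SA as (_&Hcompl&Hunion). intros HX HY.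
  set (F := fun j : nat => if j then (fun x => ~ X x) else (fun x => ~ Y x)).
  assert (HF : forall j, B (F j)) by (intros [|j]; simpl; auto).
  replace (fun x => X x /\ Y x) with (fun x => ~ (exists j, F j x)); [auto|].
  apply set_ext; intro x. split.
  - intro H. split; apply NNPP; intro H'; apply H; [exists 0%nat | exists 1%nat]; exact H'.
  - intros [H1 H2] [[|j] Hj]; simpl in Hj; auto.
Qed.

(** Maxitivity applied to the pair [X ⊆ Y] gives monotonicity. *)
Lemma measure_mono X Y : B X -> B Y -> (forall x, X x -> Y x) -> leE (tau X) (tau Y).
Proof.
  destruct SM as (_&Hmax). intros HX HY Hsub.
  set (F := fun j : nat => if j then X else Y).
  assert (HF : forall j, B (F j)) by (intros [|j]; simpl; auto).
  replace (tau Y) with (tau (fun x => exists j, F j x)).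
  - apply (proj1 (Hmax F HF)). exists 0%nat. reflexivity.
  - f_equal. apply set_ext; intro x. split.
    + intros [[|j] Hj]; simpl in Hj; auto.
    + intro; exists 1%nat; auto.
Qed.

Variable B0 : E -> Prop.
Hypothesis HB0 : B B0.

Definition null_indicator (a : ERp) (A : E -> Prop) : ERp :=
  if excluded_middle_informative (tau (fun x => A x /\ B0 x) = zeroE) then zeroE else a.

Lemma null_indicator_null a A :
  tau (fun x => A x /\ B0 x) = zeroE -> null_indicator a A = zeroE.
Proof. intro H. unfold null_indicator. destruct excluded_middle_informative; tauto. Qed.

Lemma null_indicator_nonnull a A :
  tau (fun x => A x /\ B0 x) <> zeroE -> null_indicator a A = a.
Proof. intro H. unfold null_indicator. destruct excluded_middle_informative; tauto. Qed.

(** The indicator inherits σ-maxitivity from [tau]: the union meets [B0] in a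
    null set iff every member does. *)
Lemma null_indicator_maxitive a : sigma_maxitive B (null_indicator a).
Proof.
  split.
  - apply null_indicator_null. rewrite <- (proj1 SM). f_equal. apply set_ext; tauto.
  - intros F HF.
    set (G := fun j x => F j x /\ B0 x).
    assert (HG : forall j, B (G j)) by (intro j; apply measurable_inter; auto).
    destruct (proj2 SM G HG) as [Hub Hleast].
    assert (Hunion : (fun x => (exists j, F j x) /\ B0 x) = (fun x => exists j, G j x)).
    { apply set_ext; intro x. unfold G. firstorder. }
    destruct (classic (tau (fun x => exists j, G j x) = zeroE)) as [H0|H0].
    + rewrite null_indicator_null by (rewrite Hunion; exact H0). split.
      * intros u [j ->]. rewrite null_indicator_null; [apply le_refl|].
        apply le0_eq. rewrite <- H0. apply Hub. exists j. reflexivity.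
      * intros; apply le0.
    + rewrite null_indicator_nonnull by (rewrite Hunion; exact H0).
      destruct (lub_nonzero_witness _ _ (conj Hub Hleast) H0) as [w [[j ->] Hj]].
      split.
      * intros u [k ->]. destruct (classic (tau (G k) = zeroE)) as [e|e].
        -- rewrite null_indicator_null by exact e. apply le0.
        -- rewrite null_indicator_nonnull by exact e. apply le_refl.
      * intros v Hv. specialize (Hv _ (ex_intro _ j eq_refl)).
        rewrite null_indicator_nonnull in Hv by exact Hj. exact Hv.
Qed.

(** If every measurable subset of [B0] has measure [0] or ⊙-infinite, the
    indicator is ⊙-absolutely continuous w.r.t. [tau]: a ⊙-finite [tau A]
    bounds [tau (A ∩ B0)], which is then ⊙-finite, hence [0]. *)
Lemma null_indicator_abs_cont mul one a :
  pseudo_mult mul one ->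
  (forall A, B A -> (forall x, A x -> B0 x) ->
     tau A = zeroE \/ odot_infinite mul (tau A)) ->
  abs_cont mul B (null_indicator a) tau.
Proof.
  intros PM Hspot A HA Hfin. rewrite null_indicator_null; [apply le0|].
  assert (HAB0 : B (fun x => A x /\ B0 x)) by (apply measurable_inter; auto).
  destruct (Hspot _ HAB0) as [e|e]; [tauto | exact e |].
  exfalso. apply e. apply (odot_finite_mono _ _ PM _ (tau A)); [|exact Hfin].
  apply measure_mono; auto. tauto.
Qed.

End MaxitiveMeasure.

Theorem mainTheorem7 (mul : ERp -> ERp -> ERp) (one : ERp)
  (E : Type) (B : (E -> Prop) -> Prop) (tau : (E -> Prop) -> ERp) :
  pseudo_mult mul one -> non_degenerate mul one ->
  inhabited E -> sigma_algebra B -> sigma_maxitive B tau ->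
  radon_nikodym mul B tau ->
  ~ has_spot mul B tau.
Proof.
  intros PM ND _ SA SM RN [B0 [HB0 [Hinf Hspot]]].
  set (nu := null_indicator E tau B0 one).
  destruct (RN nu (null_indicator_maxitive _ _ SA _ SM _ HB0 one)
               (null_indicator_abs_cont _ _ SA _ SM _ HB0 _ _ one PM Hspot)) as [c [Hc Hint]].
  assert (Hnu_B0 : nu B0 = one).
  { apply null_indicator_nonnull.
    replace (fun x => B0 x /\ B0 x) with B0 by (apply set_ext; tauto).
    intro e. apply Hinf. rewrite e. apply (zero_odot_finite _ _ PM). }
  apply (no_integral_on_spot _ _ PM tau B0 c _ ND (one_ne0 _ _ PM)).
  - intros t Ht. apply Hspot; [apply measurable_inter; auto | tauto].
  - rewrite <- Hnu_B0. apply Hint, HB0.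
Qed.
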